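(* Let $\xi$ be a positive real number, let $\varepsilon$ be a real number with $0<\varepsilon<1$, and let $(a_n)_{n\ge1}$ be a sequence of real numbers with $0\le a_n<1-\varepsilon$ for all $n\ge1$. Then the set of real numbers $\alpha$ such that $$a_n \le \{\xi \alpha^n\} \le a_n + \varepsilon \quad \text{for every } n\ge 1$$ has Hausdorff dimension $1$.
   Context: For a real number $x$, $\{x\}$ denotes its fractional part $x-\lfloor x\rfloor$. *)

From Stdlib Require Import Reals ClassicalEpsilon.
From Coquelicot Require Import Coquelicot.
Open Scope R_scope.

(* Fractional part {x}: Stdlib's R_Ifp.frac_part x = x - IZR (Int_part x),
   where Int_part x = up x - 1 is the floor. *)

Definition diam (U : R -> Prop) : Rbar :=
  Lub_Rbar (fun r => exists x y, U x /\ U y /\ r = Rabs (x - y)).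

(* |U|^s, with the usual conventions: |empty|^s = 0; for nonempty U of
   diameter 0, |U|^s = 1 if s = 0 and 0 if s > 0. Only used for bounded U. *)
Definition diam_pow (U : R -> Prop) (s : R) : R :=
  match diam U with
  | Finite d =>
      if Req_EM_T d 0 then
        (if Req_EM_T s 0 then
           (if excluded_middle_informative (exists x, U x) then 1 else 0)
         else 0)
      else Rpower d s
  | _ => 0
  end.

Definition nonneg_sum (u : nat -> R) : Rbar :=
  Lim_seq (fun N => sum_n u N).

Definition delta_cover (E : R -> Prop) (delta : R) (U : nat -> R -> Prop) : Prop :=
  (forall n, Rbar_le (diam (U n)) (Finite delta)) /\
  (forall x, E x -> exists n, U n x).

Definition hausdorff_content (s delta : R) (E : R -> Prop) : Rbar :=
  Glb_Rbar (fun v => exists U, delta_cover E delta U /\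
                     Finite v = nonneg_sum (fun n => diam_pow (U n) s)).

Definition hausdorff_measure (s : R) (E : R -> Prop) : Rbar :=
  Lub_Rbar (fun v => exists delta, 0 < delta /\
                     Rbar_le (Finite v) (hausdorff_content s delta E)).

Definition hausdorff_dim (E : R -> Prop) : Rbar :=
  Glb_Rbar (fun s => 0 <= s /\ hausdorff_measure s E = Finite 0).

From Stdlib Require Import Reals Lra Lia ClassicalEpsilon List ZArith.
From Coquelicot Require Import Coquelicot.
Open Scope R_scope.

(* For s > 1 every subset of R is H^s-null: R is covered by intervals of lengths
   c/(k+1) laid end to end (the harmonic series diverges), and the s-th powers of
   these lengths sum to at most 2 c^s zeta(s), which is small for small c.

   For s < 1 the set contains a Cantor set of dimension close to 1.  Call [l, r] a
   level-n window if A <= l < r <= 2A and xi x^n runs through [K + a_n, K + a_n + eps]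
   on it.  Across such a window xi x^(n+1) grows by at least A eps >= M + 1, so it
   contains M level-(n+1) windows, each of length at least (r - l) / (8A) and
   separated by gaps of at least (1 - eps) (r - l) / (8A).  Following the base-M
   digits of t in [0, 1) through these nested windows gives a map g into the set
   with |t - t'| <= C |g t - g t'|^s as soon as 1/M <= (8A)^(-s); this holds for
   large M since A = (M + 1) / eps grows only linearly in M.  Such a map forces
   H^s > 0: a cover of the set pulls back to a cover of [0, 1/2], which by
   compactness has total diameter at least 1/4. *)

Lemma pow_diff_bounds (m : nat) (x y : R) : 0 <= x <= y ->
  INR (S m) * x ^ m * (y - x) <= y ^ S m - x ^ S m <= INR (S m) * y ^ m * (y - x).
Proof.
  intros [Hx Hxy]; induction m as [|m [IHl IHr]]; [simpl; lra|].
  assert (0 <= x ^ m) by (apply pow_le; lra).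
  assert (x ^ S m <= y ^ S m) by (apply pow_incr; lra).
  replace (y ^ S (S m) - x ^ S (S m)) with (y * (y ^ S m - x ^ S m) + x ^ S m * (y - x))
    by (simpl; ring).
  rewrite S_INR; split.
  - replace ((INR (S m) + 1) * x ^ S m * (y - x))
      with (x * (INR (S m) * x ^ m * (y - x)) + x ^ S m * (y - x)) by (simpl; ring).
    assert (x * (INR (S m) * x ^ m * (y - x)) <= y * (y ^ S m - x ^ S m)).
    { apply Rmult_le_compat; try lra.
      apply Rmult_le_pos; [apply Rmult_le_pos; [apply pos_INR|lra]|lra]. }
    lra.
  - replace ((INR (S m) + 1) * y ^ S m * (y - x))
      with (y * (INR (S m) * y ^ m * (y - x)) + y ^ S m * (y - x)) by (simpl; ring).
    assert (y * (y ^ S m - x ^ S m) <= y * (INR (S m) * y ^ m * (y - x)))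
      by (apply Rmult_le_compat_l; lra).
    assert (x ^ S m * (y - x) <= y ^ S m * (y - x)) by (apply Rmult_le_compat_r; lra).
    lra.
Qed.

Lemma pow_lt_reg (m : nat) (x y : R) : (1 <= m)%nat -> 0 <= x -> 0 <= y ->
  x ^ m < y ^ m -> x < y.
Proof.
  intros Hm Hx Hy H; destruct (Rlt_le_dec x y) as [|Hyx]; [assumption|].
  pose proof (pow_incr y x m (conj Hy Hyx)); lra.
Qed.

Lemma Rpower_gt_0 (x y : R) : 0 < Rpower x y.
Proof. apply exp_pos. Qed.

Lemma exp_le_compat (x y : R) : x <= y -> exp x <= exp y.
Proof. intros [H| ->]; [left; now apply exp_increasing|lra]. Qed.

Lemma inv_le_Rpower_inv (x y s : R) : 0 < x -> 0 < y -> s * ln y <= ln x ->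
  / x <= Rpower (/ y) s.
Proof.
  intros Hx Hy H; unfold Rpower; rewrite ln_Rinv by lra.
  rewrite <- (exp_ln (/ x)), ln_Rinv by (try apply Rinv_0_lt_compat; lra).
  apply exp_le_compat; lra.
Qed.

Lemma pow_Rpower_inv (m : nat) (y : R) : (1 <= m)%nat -> 0 < y ->
  Rpower y (/ INR m) ^ m = y.
Proof.
  intros Hm Hy.
  rewrite <- Rpower_pow by apply Rpower_gt_0.
  rewrite Rpower_mult, Rinv_l by (apply not_0_INR; lia).
  now apply Rpower_1.
Qed.

Lemma frac_part_IZR_plus (K : Z) (v : R) : 0 <= v < 1 -> frac_part (IZR K + v) = v.
Proof. intros Hv; symmetry; apply (Int_part_frac_part_spec _ K v Hv); reflexivity. Qed.

Lemma nested_intervals_lub (l r : nat -> R) :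
  (forall j, l j <= l (S j)) -> (forall j, r (S j) <= r j) -> (forall j, l j <= r j) ->
  forall j, l j <= real (Lub_Rbar (fun x => exists k, x = l k)) <= r j.
Proof.
  intros Hl Hr Hlr.
  assert (Hlk : forall j k, (j <= k)%nat -> l j <= l k).
  { intros j k H; induction H; [lra|]; specialize (Hl m); lra. }
  assert (Hrk : forall j k, (j <= k)%nat -> r k <= r j).
  { intros j k H; induction H; [lra|]; specialize (Hr m); lra. }
  assert (Hlr' : forall k j, l k <= r j).
  { intros k j; destruct (Nat.le_ge_cases k j) as [H|H].
    - specialize (Hlk k j H); specialize (Hlr j); lra.
    - specialize (Hrk j k H); specialize (Hlr k); lra. }
  destruct (Lub_Rbar_correct (fun x => exists k, x = l k)) as [Hub Hleast].
  intros j.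
  assert (Hge : Rbar_le (Finite (l j)) (Lub_Rbar (fun x => exists k, x = l k)))
    by (apply Hub; eauto).
  assert (Hle : Rbar_le (Lub_Rbar (fun x => exists k, x = l k)) (Finite (r j)))
    by (apply Hleast; intros x [k ->]; apply Hlr').
  destruct (Lub_Rbar _); simpl in *; try contradiction; auto.
Qed.

Lemma first_difference (f g : nat -> Z) (J : nat) : f O = g O -> f J <> g J ->
  exists j, f j = g j /\ f (S j) <> g (S j).
Proof.
  intros H0; induction J as [|J IH]; intros HJ; [contradiction|].
  destruct (Z.eq_dec (f J) (g J)); [exists J; auto|auto].
Qed.

Lemma Rpower_pow_comm (x s : R) (j : nat) : 0 < x -> Rpower x s ^ j = Rpower (x ^ j) s.
Proof.
  intros Hx.
  rewrite <- (Rpower_pow j x Hx), <- (Rpower_pow j _ (Rpower_gt_0 x s)), !Rpower_mult.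
  f_equal; ring.
Qed.

(** * Hausdorff measure and dimension *)

Lemma diam_interval (u h : R) : 0 <= h -> diam (fun x => u <= x <= u + h) = Finite h.
Proof.
  intros Hh; apply is_lub_Rbar_unique; split.
  - intros r (x & y & Hx & Hy & ->); simpl; apply Rabs_le; lra.
  - intros b Hb; apply (Hb h); exists (u + h), u; repeat split; try lra.
    replace (u + h - u) with h by ring; symmetry; apply Rabs_pos_eq; lra.
Qed.

Lemma diam_pow_interval (u h s : R) : 0 < h ->
  diam_pow (fun x => u <= x <= u + h) s = Rpower h s.
Proof.
  intros Hh; unfold diam_pow; rewrite diam_interval by lra.
  destruct (Req_EM_T h 0); [lra|reflexivity].
Qed.

Lemma diam_pow_ge0 (U : R -> Prop) (s : R) : 0 <= diam_pow U s.
Proof.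
  unfold diam_pow; destruct (diam U) as [d| |]; try lra.
  destruct (Req_EM_T d 0); [|left; apply Rpower_gt_0].
  destruct (Req_EM_T s 0); [|lra].
  destruct (excluded_middle_informative _); lra.
Qed.

Lemma Rpower_dist_le_diam_pow (U : R -> Prop) (s delta x y : R) :
  0 <= s -> Rbar_le (diam U) (Finite delta) -> U x -> U y -> x <> y ->
  Rpower (Rabs (x - y)) s <= diam_pow U s.
Proof.
  intros Hs Hd Hx Hy Hxy.
  assert (Hpos : 0 < Rabs (x - y)) by (apply Rabs_pos_lt; lra).
  assert (Hub : Rbar_le (Finite (Rabs (x - y))) (diam U))
    by (apply (proj1 (Lub_Rbar_correct _)); eauto).
  unfold diam_pow; destruct (diam U) as [d| |]; simpl in Hub, Hd; try contradiction.
  destruct (Req_EM_T d 0); [lra|].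
  apply Rle_Rpower_l; lra.
Qed.

Lemma sum_Sn_R (f : nat -> R) (N : nat) : sum_n f (S N) = sum_n f N + f (S N).
Proof. exact (sum_Sn f N). Qed.

Lemma sum_n_ge0 (f : nat -> R) (N : nat) : (forall n, 0 <= f n) -> 0 <= sum_n f N.
Proof.
  intros Hf; induction N as [|N IH]; [rewrite sum_O; apply Hf|].
  rewrite sum_Sn_R; specialize (Hf (S N)); lra.
Qed.

Lemma sum_n_le_mono (f : nat -> R) (N N' : nat) : (forall n, 0 <= f n) ->
  (N <= N')%nat -> sum_n f N <= sum_n f N'.
Proof.
  intros Hf H; induction H as [|m _ IH]; [lra|].
  rewrite sum_Sn_R; specialize (Hf (S m)); lra.
Qed.

Lemma nonneg_sum_le (f : nat -> R) (B : R) : (forall n, 0 <= f n) ->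
  (forall N, sum_n f N <= B) -> exists v, nonneg_sum f = Finite v /\ v <= B.
Proof.
  intros Hf HB; unfold nonneg_sum.
  assert (H0 : Rbar_le (Lim_seq (fun _ => 0)) (Lim_seq (sum_n f)))
    by (apply Lim_seq_le_loc; exists O; intros; apply sum_n_ge0, Hf).
  assert (HB' : Rbar_le (Lim_seq (sum_n f)) (Lim_seq (fun _ => B)))
    by (apply Lim_seq_le_loc; exists O; intros; apply HB).
  rewrite Lim_seq_const in H0, HB'.
  destruct (Lim_seq _) as [v| |]; simpl in H0, HB'; try contradiction.
  now exists v.
Qed.

Lemma sum_n_le_nonneg_sum (f : nat -> R) (v : R) (N : nat) : (forall n, 0 <= f n) ->
  nonneg_sum f = Finite v -> sum_n f N <= v.
Proof.
  intros Hf Hv.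
  assert (Hinc : forall n, sum_n f n <= sum_n f (S n)) by (intros; apply sum_n_le_mono; auto).
  apply (is_lim_seq_incr_compare (sum_n f)); [|exact Hinc].
  rewrite <- Hv; apply Lim_seq_correct, ex_lim_seq_incr, Hinc.
Qed.

Lemma hausdorff_content_ge0 (s delta : R) (E : R -> Prop) :
  Rbar_le (Finite 0) (hausdorff_content s delta E).
Proof.
  apply Glb_Rbar_correct; intros v (U & _ & Hv); simpl.
  assert (H : Rbar_le (Lim_seq (fun _ => 0)) (nonneg_sum (fun n => diam_pow (U n) s)))
    by (apply Lim_seq_le_loc; exists O; intros; apply sum_n_ge0; intros; apply diam_pow_ge0).
  now rewrite Lim_seq_const, <- Hv in H.
Qed.

Lemma hausdorff_content_le_cover (s delta B : R) (E : R -> Prop) (U : nat -> R -> Prop) :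
  delta_cover E delta U -> (forall N, sum_n (fun n => diam_pow (U n) s) N <= B) ->
  Rbar_le (hausdorff_content s delta E) (Finite B).
Proof.
  intros HU HB.
  destruct (nonneg_sum_le (fun n => diam_pow (U n) s) B) as (v & Hv & HvB);
    [intros; apply diam_pow_ge0|exact HB|].
  apply Rbar_le_trans with (Finite v); [|exact HvB].
  apply Glb_Rbar_correct; exists U; auto.
Qed.

Lemma hausdorff_measure_eq0 (s : R) (E : R -> Prop) :
  (forall delta eta, 0 < delta -> 0 < eta -> exists U, delta_cover E delta U /\
     forall N, sum_n (fun n => diam_pow (U n) s) N <= eta) ->
  hausdorff_measure s E = Finite 0.
Proof.
  intros Hsmall; apply is_lub_Rbar_unique; split.
  - intros v (delta & Hdelta & Hv); simpl.
    apply Rnot_lt_le; intros Hv0.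
    destruct (Hsmall delta (v / 2) Hdelta ltac:(lra)) as (U & HU & HB).
    pose proof (Rbar_le_trans _ _ _ Hv (hausdorff_content_le_cover _ _ _ _ _ HU HB)).
    simpl in *; lra.
  - intros b Hb; apply Hb; exists 1; split; [lra|apply hausdorff_content_ge0].
Qed.

Lemma hausdorff_content_le_measure (s delta v : R) (E : R -> Prop) : 0 < delta ->
  Rbar_le (Finite v) (hausdorff_content s delta E) ->
  Rbar_le (Finite v) (hausdorff_measure s E).
Proof. intros Hdelta Hv; apply Lub_Rbar_correct; eauto. Qed.

Lemma hausdorff_dim_eq (E : R -> Prop) (d : R) : 0 <= d ->
  (forall s, d < s -> hausdorff_measure s E = Finite 0) ->
  (forall s, 0 <= s < d -> hausdorff_measure s E <> Finite 0) ->
  hausdorff_dim E = Finite d.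
Proof.
  intros Hd Hnull Hpos; apply is_glb_Rbar_unique; split.
  - intros s [Hs0 Hs]; simpl; apply Rnot_lt_le; intros Hsd.
    exact (Hpos s (conj Hs0 Hsd) Hs).
  - intros b Hb.
    assert (Hbs : forall s, d < s -> Rbar_le b (Finite s))
      by (intros s Hs; apply Hb; split; [lra|auto]).
    destruct b as [b| |]; simpl; auto.
    + apply Rnot_lt_le; intros Hdb.
      specialize (Hbs ((b + d) / 2) ltac:(lra)); simpl in Hbs; lra.
    + exact (Hbs (d + 1) ltac:(lra)).
Qed.

(** * Subsets of R are H^s-null for s > 1 *)

Fixpoint harmonic (n : nat) : R :=
  match n with O => 0 | S k => harmonic k + / INR (S k) end.

Lemma harmonic_double (n : nat) : (1 <= n)%nat -> harmonic n + / 2 <= harmonic (2 * n).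
Proof.
  induction 1 as [|m Hm IH]; [simpl; lra|].
  replace (2 * S m)%nat with (S (S (2 * m))) by lia.
  change (harmonic (S (S (2 * m))))
    with (harmonic (2 * m) + / INR (S (2 * m)) + / INR (S (S (2 * m)))).
  change (harmonic (S m)) with (harmonic m + / INR (S m)).
  rewrite !S_INR, mult_INR; replace (INR 2) with 2 by (simpl; lra).
  assert (0 <= INR m) by apply pos_INR.
  assert (/ (2 * INR m + 1 + 1) <= / (2 * INR m + 1)) by (apply Rinv_le_contravar; lra).
  replace (/ (INR m + 1)) with (2 * / (2 * INR m + 1 + 1)) by (field; lra).
  lra.
Qed.

Lemma harmonic_unbounded (X : R) : exists n, X < harmonic n.
Proof.
  assert (Hpow2 : forall k, 1 + INR k / 2 <= harmonic (2 ^ k)).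
  { induction k as [|k IH]; [simpl; lra|].
    rewrite Nat.pow_succ_r', S_INR.
    pose proof (harmonic_double (2 ^ k)) as H.
    assert (1 <= 2 ^ k)%nat by (apply Nat.neq_0_lt_0, Nat.pow_nonzero; lia).
    specialize (H ltac:(assumption)); lra. }
  destruct (INR_unbounded (2 * X)) as [k Hk].
  exists (2 ^ k)%nat; specialize (Hpow2 k); lra.
Qed.

Lemma harmonic_locate (X : R) : 0 <= X -> exists k, harmonic k <= X <= harmonic (S k).
Proof.
  intros HX; destruct (harmonic_unbounded X) as [K HK].
  induction K as [|K IH]; [simpl in HK; lra|].
  destruct (Rlt_le_dec X (harmonic K)); [auto|now exists K; split; [|left]].
Qed.

Fixpoint zeta_partial (s : R) (n : nat) : R :=
  match n with O => 0 | S k => zeta_partial s k + Rpower (INR (S k)) (- s) end.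

Lemma Rpower_opp_antitone (x y s : R) : 0 <= s -> 0 < x <= y ->
  Rpower y (- s) <= Rpower x (- s).
Proof.
  intros Hs Hxy; rewrite !Rpower_Ropp.
  apply Rinv_le_contravar; [apply Rpower_gt_0|apply Rle_Rpower_l; lra].
Qed.

Lemma zeta_partial_double (s : R) (N : nat) : 0 <= s ->
  zeta_partial s (S (2 * N)) <= 1 + 2 * Rpower 2 (- s) * zeta_partial s N.
Proof.
  intros Hs; induction N as [|N IH].
  - simpl; unfold Rpower; rewrite ln_1, Rmult_0_r, exp_0; lra.
  - replace (S (2 * S N)) with (S (S (S (2 * N)))) by lia; cbn [zeta_partial] in *.
    assert (Hsplit : Rpower (INR (S (S (2 * N)))) (- s)
                     = Rpower 2 (- s) * Rpower (INR (S N)) (- s)).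
    { rewrite Rpower_mult_distr by (try apply lt_0_INR; lia || lra).
      f_equal; rewrite !S_INR, mult_INR; simpl; ring. }
    assert (Rpower (INR (S (S (S (2 * N))))) (- s) <= Rpower (INR (S (S (2 * N)))) (- s))
      by (apply Rpower_opp_antitone; [lra|split; [apply lt_0_INR; lia|apply le_INR; lia]]).
    lra.
Qed.

Lemma zeta_partial_bounded (s : R) : 1 < s -> exists Z, 0 < Z /\ forall N, zeta_partial s N <= Z.
Proof.
  intros Hs; set (rho := 2 * Rpower 2 (- s)).
  assert (Hrho : 0 < rho < 1).
  { assert (Hhalf : Rpower 2 (- s) < Rpower 2 (- (1))) by (apply Rpower_lt; lra).
    rewrite (Rpower_Ropp 2 1), Rpower_1 in Hhalf by lra.
    pose proof (Rpower_gt_0 2 (- s)); unfold rho; lra. }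
  exists (/ (1 - rho)); split; [apply Rinv_0_lt_compat; lra|].
  assert (Hfix : 1 + rho * / (1 - rho) = / (1 - rho)) by (field; lra).
  assert (Hpos : 0 < / (1 - rho)) by (apply Rinv_0_lt_compat; lra).
  intros N; induction N as [N IH] using lt_wf_ind.
  destruct N as [|N']; [simpl; lra|].
  set (k := Nat.div2 (S N')).
  pose proof (Nat.div2_odd (S N')) as Hk; fold k in Hk.
  assert (Hmono : forall n m, (n <= m)%nat -> zeta_partial s n <= zeta_partial s m).
  { induction 1; cbn [zeta_partial]; [lra|pose proof (Rpower_gt_0 (INR (S m)) (- s)); lra]. }
  apply Rle_trans with (zeta_partial s (S (2 * k)));
    [apply Hmono; destruct (Nat.odd (S N')); simpl in Hk; lia|].
  apply Rle_trans with (1 + rho * zeta_partial s k); [apply zeta_partial_double; lra|].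
  assert (zeta_partial s k <= / (1 - rho))
    by (apply IH; destruct (Nat.odd (S N')); simpl in Hk; lia).
  nra.
Qed.

(* The sets 2k and 2k+1 are the intervals [c H_k, c H_(k+1)] and
   [-c H_(k+1), -c H_k] of length c / (k+1), H_k being the harmonic numbers. *)
Definition harmonic_cover (c : R) (n : nat) : R -> Prop :=
  let k := Nat.div2 n in
  let u := if Nat.odd n then - (c * harmonic (S k)) else c * harmonic k in
  fun x => u <= x <= u + c / INR (S k).

Lemma harmonic_cover_covers (c x : R) : 0 < c -> exists n, harmonic_cover c n x.
Proof.
  intros Hc.
  assert (Hstep : forall k, c * harmonic (S k) = c * harmonic k + c / INR (S k))
    by (intros k; cbn [harmonic]; field; apply not_0_INR; lia).
  destruct (Rle_lt_dec 0 x) as [Hx|Hx].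
  - destruct (harmonic_locate (x / c)) as [k Hk]; [apply Rdiv_le_0_compat; lra|].
    exists (2 * k)%nat; unfold harmonic_cover.
    rewrite Nat.odd_even, Nat.div2_double, <- Hstep.
    replace x with (c * (x / c)) by (field; lra); split; apply Rmult_le_compat_l; lra.
  - destruct (harmonic_locate (- x / c)) as [k Hk]; [apply Rdiv_le_0_compat; lra|].
    exists (2 * k + 1)%nat; unfold harmonic_cover.
    rewrite Nat.odd_odd, Nat.div2_odd'.
    replace (- (c * harmonic (S k)) + c / INR (S k)) with (- (c * harmonic k))
      by (rewrite Hstep; ring).
    replace x with (- (c * (- x / c))) by (field; lra).
    split; apply Ropp_le_contravar, Rmult_le_compat_l; lra.
Qed.

Lemma diam_harmonic_cover (c : R) (n : nat) : 0 < c ->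
  diam (harmonic_cover c n) = Finite (c / INR (S (Nat.div2 n))).
Proof.
  intros Hc; apply diam_interval.
  apply Rlt_le, Rdiv_lt_0_compat; [lra|apply lt_0_INR, Nat.lt_0_succ].
Qed.

Lemma diam_pow_harmonic_cover (c s : R) (n : nat) : 0 < c ->
  diam_pow (harmonic_cover c n) s = Rpower c s * Rpower (INR (S (Nat.div2 n))) (- s).
Proof.
  intros Hc; assert (Hk : 0 < INR (S (Nat.div2 n))) by apply lt_0_INR, Nat.lt_0_succ.
  unfold harmonic_cover; rewrite diam_pow_interval by (apply Rdiv_lt_0_compat; lra).
  unfold Rdiv; rewrite <- Rpower_mult_distr by (try apply Rinv_0_lt_compat; lra).
  f_equal; unfold Rpower; rewrite ln_Rinv by lra; f_equal; ring.
Qed.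

Lemma sum_diam_pow_harmonic_cover (c s : R) (N : nat) : 0 < c ->
  @eq R (sum_n (fun n => diam_pow (harmonic_cover c n) s) (S (2 * N)))
         (2 * Rpower c s * zeta_partial s (S N)).
Proof.
  intros Hc; rewrite (sum_n_ext _ (fun n => Rpower c s * Rpower (INR (S (Nat.div2 n))) (- s)))
    by (intros n; apply diam_pow_harmonic_cover, Hc).
  induction N as [|N IH].
  - rewrite sum_Sn_R, sum_O; simpl; ring.
  - replace (S (2 * S N)) with (S (S (S (2 * N)))) by lia.
    rewrite !sum_Sn_R, <- sum_Sn_R, IH.
    replace (S (S (2 * N))) with (2 * S N)%nat by lia.
    replace (S (2 * S N)) with (2 * S N + 1)%nat by lia.
    rewrite Nat.div2_double, Nat.div2_odd'; cbn [zeta_partial]; ring.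
Qed.

Lemma Rpower_le_base (c s : R) : 0 < c <= 1 -> 1 <= s -> Rpower c s <= c.
Proof.
  intros Hc Hs; unfold Rpower; rewrite <- (exp_ln c) at 2 by lra.
  assert (ln c <= 0) by (rewrite <- ln_1; apply ln_le; lra).
  apply exp_le_compat; nra.
Qed.

Lemma hausdorff_measure_gt1 (s : R) (E : R -> Prop) : 1 < s -> hausdorff_measure s E = Finite 0.
Proof.
  intros Hs; destruct (zeta_partial_bounded s Hs) as (Z & HZ & HT).
  apply hausdorff_measure_eq0; intros delta eta Hdelta Heta.
  set (c := Rmin (Rmin delta 1) (eta / (2 * Z))).
  assert (Hc : 0 < c) by (repeat apply Rmin_pos; try apply Rdiv_lt_0_compat; lra).
  assert (Hcd : c <= Rmin delta 1) by apply Rmin_l.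
  assert (Hce : 2 * Z * c <= eta).
  { assert (c <= eta / (2 * Z)) by apply Rmin_r.
    apply (Rmult_le_compat_l (2 * Z)) in H; [|lra].
    replace (2 * Z * (eta / (2 * Z))) with eta in H by (field; lra); exact H. }
  pose proof (Rmin_l delta 1); pose proof (Rmin_r delta 1).
  assert (Hcs : Rpower c s <= c) by (apply Rpower_le_base; lra).
  exists (harmonic_cover c); repeat split.
  - intros n; rewrite diam_harmonic_cover by exact Hc; simpl.
    assert (Hk : 1 <= INR (S (Nat.div2 n))) by apply (le_INR 1), le_n_S, Nat.le_0_l.
    apply Rle_trans with c; [|lra].
    apply (Rmult_le_reg_r (INR (S (Nat.div2 n)))); [lra|].
    unfold Rdiv; rewrite Rmult_assoc, Rinv_l by lra; nra.
  - intros x _; now apply harmonic_cover_covers.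
  - intros N; apply Rle_trans with (sum_n (fun n => diam_pow (harmonic_cover c n) s) (S (2 * N))).
    { apply sum_n_le_mono; [intros; apply diam_pow_ge0|lia]. }
    rewrite sum_diam_pow_harmonic_cover by exact Hc.
    specialize (HT (S N)); pose proof (Rpower_gt_0 c s); nra.
Qed.

(** * Co-Hoelder images of [0, 1) have positive H^s measure *)

Definition sum_list (f : nat -> R) (l : list nat) : R := fold_right (fun i acc => f i + acc) 0 l.

Lemma sum_list_seq (f : nat -> R) (N : nat) : sum_n f N = sum_list f (seq 0 (S N)).
Proof.
  induction N as [|N IH]; [rewrite sum_O; simpl; ring|].
  rewrite sum_Sn_R, IH, (seq_S (S N)).
  assert (Happ : forall l1 l2, sum_list f (l1 ++ l2) = sum_list f l1 + sum_list f l2)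
    by (induction l1 as [|i l1 IHl]; intros; simpl; [ring|rewrite IHl; ring]).
  rewrite Happ; simpl; ring.
Qed.

Lemma sum_list_ge0 (f : nat -> R) (l : list nat) : (forall j, 0 <= f j) -> 0 <= sum_list f l.
Proof. intros Hf; induction l as [|i l IH]; simpl; [lra|]; specialize (Hf i); lra. Qed.

Lemma sum_list_remove (f : nat -> R) (l : list nat) (i : nat) : (forall j, 0 <= f j) ->
  In i l -> f i + sum_list f (remove Nat.eq_dec i l) <= sum_list f l.
Proof.
  intros Hf; induction l as [|j l IH]; [intros []|]; intros Hin; simpl.
  assert (Hrem : sum_list f (remove Nat.eq_dec i l) <= sum_list f l).
  { clear IH Hin; induction l as [|k l IHl]; simpl; [lra|].
    destruct (Nat.eq_dec i k); simpl; pose proof (Hf k); lra. }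
  destruct (Nat.eq_dec i j) as [<-|Hij]; simpl; [lra|].
  destruct Hin as [->|Hin]; [congruence|].
  specialize (IH Hin); lra.
Qed.

Lemma finite_interval_cover_length (lo hi : nat -> R) (l : list nat) (a b : R) :
  (forall i, lo i <= hi i) -> a <= b ->
  (forall y, a <= y <= b -> exists i, In i l /\ lo i < y < hi i) ->
  b - a <= sum_list (fun i => hi i - lo i) l.
Proof.
  intros Hlh; remember (length l) as n eqn:Hn; revert l a Hn.
  induction n as [n IH] using lt_wf_ind; intros l a Hn Hab Hcov.
  assert (Hnn : forall i, 0 <= hi i - lo i) by (intros j; specialize (Hlh j); lra).
  destruct (Hcov a) as (i & Hin & Hlo & Hhi); [lra|].
  pose proof (sum_list_remove _ l i Hnn Hin) as Hrem.
  destruct (Rlt_le_dec b (hi i)) as [Hb|Hb].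
  - pose proof (sum_list_ge0 _ (remove Nat.eq_dec i l) Hnn); lra.
  - assert (b - hi i <= sum_list (fun i => hi i - lo i) (remove Nat.eq_dec i l)); [|lra].
    apply (IH (length (remove Nat.eq_dec i l))); auto.
    + subst n; apply remove_length_lt, Hin.
    + intros y Hy; destruct (Hcov y) as (j & Hj & Hyj); [lra|].
      exists j; split; [apply in_in_remove; [intros ->; lra|exact Hj]|exact Hyj].
Qed.

Lemma list_INR_bound (l : list R) : (forall x, In x l -> exists n, x = INR n) ->
  exists N, forall n, In (INR n) l -> (n <= N)%nat.
Proof.
  induction l as [|x l IH]; intros Hl; [exists O; intros n []|].
  destruct IH as [N HN]; [intros y Hy; apply Hl; now right|].
  destruct (Hl x (or_introl eq_refl)) as [m ->].
  exists (Nat.max N m); intros n [Hmn|Hn].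
  - apply INR_eq in Hmn; lia.
  - specialize (HN n Hn); lia.
Qed.

Lemma open_intervals_cover_length (lo hi : nat -> R) (a b : R) :
  (forall n, lo n <= hi n) -> a <= b ->
  (forall y, a <= y <= b -> exists n, lo n < y < hi n) ->
  exists N, b - a <= sum_n (fun n => hi n - lo n) N.
Proof.
  intros Hlh Hab Hcov.
  assert (Hind : forall x, (exists y, exists n, x = INR n /\ lo n < y < hi n) ->
                           exists n, x = INR n)
    by (intros x (y & n & Hx & _); eauto).
  set (fam := mkfamily (fun x => exists n, x = INR n)
                (fun x y => exists n, x = INR n /\ lo n < y < hi n) Hind).
  destruct (compact_P3 a b fam) as (D & HDcov & l & Hl).
  - split.
    + intros y Hy; destruct (Hcov y Hy) as [n Hn]; exists (INR n); simpl; eauto.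
    + intros x y (n & Hx & Hy).
      assert (Hd : 0 < Rmin (y - lo n) (hi n - y)) by (apply Rmin_pos; lra).
      exists (mkposreal _ Hd); intros z Hz; simpl; exists n; split; [exact Hx|].
      unfold disc in Hz; simpl in Hz; apply Rabs_lt_between in Hz.
      pose proof (Rmin_l (y - lo n) (hi n - y)); pose proof (Rmin_r (y - lo n) (hi n - y)).
      lra.
  - destruct (list_INR_bound l) as [N HN]; [intros x Hx; apply Hl in Hx; apply Hx|].
    exists N; rewrite sum_list_seq.
    apply finite_interval_cover_length; auto.
    intros y Hy; destruct (HDcov y Hy) as (x & (n & Hxn & Hn) & HDx).
    exists n; split; [|exact Hn].
    apply in_seq; split; [lia|].
    assert (Hin : In (INR n) l) by (apply Hl; subst x; split; [exists n|]; auto).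
    specialize (HN n Hin); lia.
Qed.

Lemma sum_diameters_cover_ge (w : nat -> R) (V : nat -> R -> Prop) (B : R) :
  (forall n, 0 <= w n) ->
  (forall n x y, V n x -> V n y -> Rabs (x - y) <= w n) ->
  (forall t, 0 <= t <= / 2 -> exists n, V n t) ->
  (forall N, sum_n w N <= B) -> / 4 <= B.
Proof.
  intros Hw Hdiam Hcov HB; apply Rnot_lt_le; intros HBlt.
  set (eta := (/ 4 - B) / 4).
  assert (Heta : 0 < eta) by (unfold eta; lra).
  (* Thicken each V n into an open interval, with geometric slack so that
     the total slack is at most 4 eta. *)
  set (p := fun n => epsilon (inhabits 0) (V n)).
  set (lo := fun n => p n - w n - eta * (/ 2) ^ n).
  set (hi := fun n => p n + w n + eta * (/ 2) ^ n).
  assert (Hpow : forall n, 0 < (/ 2) ^ n) by (intros; apply pow_lt; lra).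
  destruct (open_intervals_cover_length lo hi 0 (/ 2)) as [N HN].
  - intros n; unfold lo, hi; specialize (Hw n); specialize (Hpow n); nra.
  - lra.
  - intros t Ht; destruct (Hcov t Ht) as [n Hn]; exists n.
    assert (Hp : V n (p n)) by (apply epsilon_spec; eauto).
    specialize (Hdiam n t (p n) Hn Hp); apply Rabs_le_between in Hdiam.
    specialize (Hpow n); unfold lo, hi; nra.
  - assert (Hsum : forall K, @eq R (sum_n (fun n => hi n - lo n) K)
                                  (2 * sum_n w K + 2 * eta * (2 - (/ 2) ^ K))).
    { intros K; unfold hi, lo; induction K as [|K IH]; [rewrite !sum_O; simpl; ring|].
      rewrite !sum_Sn_R, IH, <- tech_pow_Rmult; field. }
    rewrite Hsum in HN; specialize (HB N); specialize (Hpow N); unfold eta in HN; nra.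
Qed.

Lemma hausdorff_measure_pos_of_coholder (E : R -> Prop) (g : R -> R) (s C : R) :
  0 <= s -> 0 < C ->
  (forall t, 0 <= t < 1 -> E (g t)) ->
  (forall t t', 0 <= t < 1 -> 0 <= t' < 1 -> t <> t' ->
     g t <> g t' /\ Rabs (t - t') <= C * Rpower (Rabs (g t - g t')) s) ->
  hausdorff_measure s E <> Finite 0.
Proof.
  intros Hs HC HE Hg.
  assert (Hcontent : Rbar_le (Finite (/ (4 * C))) (hausdorff_content s 1 E)).
  { apply Glb_Rbar_correct; intros v (U & [Hdiam Hcov] & Hv); simpl.
    assert (Hquarter : / 4 <= C * v).
    { apply (sum_diameters_cover_ge (fun n => C * diam_pow (U n) s)
               (fun n t => 0 <= t < 1 /\ U n (g t))).
      - intros n; apply Rmult_le_pos; [lra|apply diam_pow_ge0].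
      - intros n x y [Hx HUx] [Hy HUy]; destruct (Req_dec x y) as [->|Hxy].
        + rewrite Rminus_diag, Rabs_R0; apply Rmult_le_pos; [lra|apply diam_pow_ge0].
        + destruct (Hg x y Hx Hy Hxy) as [Hgxy Hhol].
          apply (Rle_trans _ _ _ Hhol), Rmult_le_compat_l; [lra|].
          apply (Rpower_dist_le_diam_pow _ _ 1); auto.
      - intros t Ht; destruct (Hcov (g t) (HE t ltac:(lra))) as [n Hn].
        exists n; split; [lra|exact Hn].
      - intros N; rewrite (sum_n_mult_l C); apply Rmult_le_compat_l; [lra|].
        apply sum_n_le_nonneg_sum; [intros; apply diam_pow_ge0|auto]. }
    apply (Rmult_le_reg_l (4 * C)); [lra|]; rewrite Rinv_r; lra. }
  intros H0.
  pose proof (hausdorff_content_le_measure s 1 _ E Rlt_0_1 Hcontent) as Hpos.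
  rewrite H0 in Hpos; simpl in Hpos.
  assert (0 < / (4 * C)) by (apply Rinv_0_lt_compat; lra); lra.
Qed.

(** * A Cantor set inside the set of the theorem *)

Section CantorConstruction.

Variables (xi eps : R) (a : nat -> R) (M : nat) (A : R).
Hypothesis xi_pos : 0 < xi.
Hypothesis eps_bounds : 0 < eps < 1.
Hypothesis a_bounds : forall n, (1 <= n)%nat -> 0 <= a n < 1 - eps.
Hypothesis M_ge2 : (2 <= M)%nat.
Hypothesis A_ge1 : 1 <= A.
Hypothesis xiA_ge2 : 2 <= xi * A.
Hypothesis A_room : INR M + 1 <= A * eps.

Definition frac_set (alpha : R) : Prop :=
  forall n, (1 <= n)%nat -> a n <= frac_part (xi * alpha ^ n) <= a n + eps.

Definition window (n : nat) (I : R * R) : Prop :=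
  A <= fst I /\ fst I < snd I /\ snd I <= 2 * A /\
  exists K : Z, xi * fst I ^ n = IZR K + a n /\ xi * snd I ^ n = IZR K + a n + eps.

Lemma xi_pow_le (m : nat) (x y : R) : 0 <= x <= y -> xi * x ^ m <= xi * y ^ m.
Proof. intros; apply Rmult_le_compat_l; [lra|apply pow_incr; lra]. Qed.

Lemma xi_pow_lt_reg (m : nat) (x y : R) : (1 <= m)%nat -> 0 <= x -> 0 <= y ->
  xi * x ^ m < xi * y ^ m -> x < y.
Proof. intros Hm Hx Hy H; apply (pow_lt_reg m); auto; apply (Rmult_lt_reg_l xi); lra. Qed.

(* On a level-n window, x -> xi x^(n+1) has slope at most 8 A eps / (r - l):
   the slope is about (n+1) xi r^n, while the window has length about
   eps / (n xi l^(n-1)). *)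
Lemma window_stretch (n : nat) (l r x y : R) : (1 <= n)%nat -> window n (l, r) ->
  l <= x <= y -> y <= r ->
  (r - l) * (xi * (y ^ S n - x ^ S n)) <= 8 * A * eps * (y - x).
Proof.
  intros Hn (HlA & Hlr & Hr2A & K & HKl & HKr) Hxy Hyr; cbn [fst snd] in *.
  set (P := IZR K + a n) in *.
  destruct n as [|n]; [lia|].
  assert (HP : 1 <= P).
  { assert (l * 1 <= l * l ^ n) by (apply Rmult_le_compat_l, pow_R1_Rle; lra).
    assert (xi * A <= xi * l ^ S n) by (simpl; apply Rmult_le_compat_l; lra).
    lra. }
  assert (Hparent : INR (S n) * P * (r - l) <= 2 * A * eps).
  { destruct (pow_diff_bounds n l r) as [Hlow _]; [lra|].
    assert (Hslope : xi * (INR (S n) * l ^ n * (r - l)) <= eps).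
    { replace eps with (xi * (r ^ S n - l ^ S n)) by lra.
      apply Rmult_le_compat_l; lra. }
    replace (INR (S n) * P * (r - l)) with (l * (xi * (INR (S n) * l ^ n * (r - l))))
      by (rewrite <- HKl; simpl; ring).
    apply Rle_trans with (l * eps); [apply Rmult_le_compat_l; lra|nra]. }
  assert (Hchild : xi * (y ^ S (S n) - x ^ S (S n)) <= 4 * INR (S n) * P * (y - x)).
  { destruct (pow_diff_bounds (S n) x y) as [_ Hup]; [lra|].
    assert (Hyn : xi * y ^ S n <= P + eps) by (rewrite <- HKr; apply xi_pow_le; lra).
    assert (Hm : INR (S (S n)) <= 2 * INR (S n))
      by (rewrite (S_INR (S n)); pose proof (le_INR 1 (S n) ltac:(lia)); simpl in *; lra).
    assert (0 <= xi * y ^ S n) by (apply Rmult_le_pos; [lra|apply pow_le; lra]).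
    apply Rle_trans with (INR (S (S n)) * (xi * y ^ S n) * (y - x)).
    - replace (INR (S (S n)) * (xi * y ^ S n) * (y - x))
        with (xi * (INR (S (S n)) * y ^ S n * (y - x))) by ring.
      apply Rmult_le_compat_l; lra.
    - apply Rmult_le_compat_r; [lra|].
      apply Rle_trans with (2 * INR (S n) * (2 * P)); [|lra].
      apply Rmult_le_compat; try lra; apply pos_INR. }
  apply Rle_trans with ((r - l) * (4 * INR (S n) * P * (y - x))).
  - apply Rmult_le_compat_l; [lra|exact Hchild].
  - replace ((r - l) * (4 * INR (S n) * P * (y - x)))
      with (4 * (y - x) * (INR (S n) * P * (r - l))) by ring.
    replace (8 * A * eps * (y - x)) with (4 * (y - x) * (2 * A * eps)) by ring.
    apply Rmult_le_compat_l; lra.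
Qed.

Definition pow_preimage (m : nat) (v : R) : R := Rpower (v / xi) (/ INR m).

Lemma pow_preimage_spec (m : nat) (v : R) : (1 <= m)%nat -> 0 < v ->
  0 < pow_preimage m v /\ xi * pow_preimage m v ^ m = v.
Proof.
  intros Hm Hv; split; [apply Rpower_gt_0|].
  unfold pow_preimage; rewrite pow_Rpower_inv; [field; lra|exact Hm|].
  apply Rdiv_lt_0_compat; lra.
Qed.

(* The level-m window over the integer K = up (xi l^m) + i, i.e. the i-th
   integer above xi l^m. *)
Definition child (m : nat) (l : R) (i : nat) : R * R :=
  let v := IZR (up (xi * l ^ m)) + INR i + a m in
  (pow_preimage m v, pow_preimage m (v + eps)).

Lemma child_values (n : nat) (l r : R) (i : nat) : (1 <= n)%nat -> window n (l, r) ->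
  (i < M)%nat ->
  let v := IZR (up (xi * l ^ S n)) + INR i + a (S n) in
  xi * l ^ S n < v /\ v + eps < xi * r ^ S n /\
  xi * fst (child (S n) l i) ^ S n = v /\ xi * snd (child (S n) l i) ^ S n = v + eps /\
  0 < fst (child (S n) l i) /\ 0 < snd (child (S n) l i).
Proof.
  intros Hn (HlA & Hlr & Hr2A & K & HKl & HKr) Hi v; cbn [fst snd] in *.
  destruct (archimed (xi * l ^ S n)) as [Hup1 Hup2].
  assert (Ha : 0 <= a (S n) < 1 - eps) by (apply a_bounds; lia).
  assert (HiM : INR i + 1 <= INR M) by (rewrite <- S_INR; apply le_INR; lia).
  assert (Hi0 : 0 <= INR i) by apply pos_INR.
  assert (Hl0 : 0 < xi * l ^ S n) by (apply Rmult_lt_0_compat; [lra|apply pow_lt; lra]).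
  assert (Hgrowth : A * eps <= xi * r ^ S n - xi * l ^ S n).
  { assert (0 <= IZR K + a n) by (rewrite <- HKl; apply Rmult_le_pos; [lra|apply pow_le; lra]).
    replace (xi * r ^ S n - xi * l ^ S n)
      with ((r - l) * (IZR K + a n) + r * eps) by (rewrite <- !tech_pow_Rmult; nra).
    nra. }
  assert (Hv : xi * l ^ S n < v) by (unfold v; lra).
  destruct (pow_preimage_spec (S n) v) as [Hp1 Hp2]; [lia|lra|].
  destruct (pow_preimage_spec (S n) (v + eps)) as [Hp3 Hp4]; [lia|lra|].
  unfold child; simpl fst; simpl snd; fold v; repeat split; auto; unfold v in *; lra.
Qed.

Lemma child_window (n : nat) (l r : R) (i : nat) : (1 <= n)%nat -> window n (l, r) ->
  (i < M)%nat ->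
  window (S n) (child (S n) l i) /\ l < fst (child (S n) l i) /\ snd (child (S n) l i) < r.
Proof.
  intros Hn Hw Hi.
  destruct (child_values n l r i Hn Hw Hi) as (Hlv & Hvr & Hl' & Hr' & Hl'0 & Hr'0).
  destruct Hw as (HlA & Hlr & Hr2A & _); cbn [fst snd] in *.
  assert (Hll' : l < fst (child (S n) l i)) by (apply (xi_pow_lt_reg (S n)); lra || lia).
  assert (Hr'r : snd (child (S n) l i) < r) by (apply (xi_pow_lt_reg (S n)); lra || lia).
  assert (Hl'r' : fst (child (S n) l i) < snd (child (S n) l i))
    by (apply (xi_pow_lt_reg (S n)); lra || lia).
  repeat split; try lra.
  exists (up (xi * l ^ S n) + Z.of_nat i)%Z.
  rewrite plus_IZR, <- INR_IZR_INZ; lra.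
Qed.

Lemma child_length (n : nat) (l r : R) (i : nat) : (1 <= n)%nat -> window n (l, r) ->
  (i < M)%nat ->
  r - l <= 8 * A * (snd (child (S n) l i) - fst (child (S n) l i)).
Proof.
  intros Hn Hw Hi.
  destruct (child_values n l r i Hn Hw Hi) as (_ & _ & Hl' & Hr' & _).
  destruct (child_window n l r i Hn Hw Hi) as ((_ & Hl'r' & _) & Hll' & Hr'r).
  pose proof (window_stretch n l r (fst (child (S n) l i)) (snd (child (S n) l i)) Hn Hw
                ltac:(lra) ltac:(lra)) as Hs.
  replace (xi * (snd (child (S n) l i) ^ S n - fst (child (S n) l i) ^ S n)) with eps
    in Hs by lra.
  apply (Rmult_le_reg_r eps); [lra|]; lra.
Qed.

Lemma child_separated (n : nat) (l r : R) (i i' : nat) (x y : R) :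
  (1 <= n)%nat -> window n (l, r) -> (i < i')%nat -> (i' < M)%nat ->
  fst (child (S n) l i) <= x <= snd (child (S n) l i) ->
  fst (child (S n) l i') <= y <= snd (child (S n) l i') ->
  (1 - eps) * (r - l) <= 8 * A * (y - x).
Proof.
  intros Hn Hw Hii' Hi' Hx Hy.
  assert (Hi : (i < M)%nat) by lia.
  destruct (child_values n l r i Hn Hw Hi) as (_ & _ & _ & Hr1 & Hl10 & _).
  destruct (child_values n l r i' Hn Hw Hi') as (_ & _ & Hl2 & _ & Hl20 & _).
  destruct (child_window n l r i Hn Hw Hi) as (_ & Hll1 & _).
  destruct (child_window n l r i' Hn Hw Hi') as (_ & _ & Hr2r).
  assert (Hii : INR i + 1 <= INR i') by (rewrite <- S_INR; apply le_INR; lia).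
  assert (Hgap : 1 - eps <= xi * y ^ S n - xi * x ^ S n).
  { pose proof (xi_pow_le (S n) x (snd (child (S n) l i)) ltac:(lra)).
    pose proof (xi_pow_le (S n) (fst (child (S n) l i')) y ltac:(lra)).
    lra. }
  assert (Hxy : x < y) by (apply (xi_pow_lt_reg (S n)); lra || lia).
  pose proof (window_stretch n l r x y Hn Hw ltac:(lra) ltac:(lra)) as Hs.
  destruct Hw as (_ & Hlr & _).
  apply Rle_trans with ((r - l) * (xi * (y ^ S n - x ^ S n))).
  - rewrite (Rmult_comm (1 - eps)); apply Rmult_le_compat_l; lra.
  - apply (Rle_trans _ _ _ Hs).
    assert (0 <= 8 * A * (y - x)) by (apply Rmult_le_pos; lra).
    replace (8 * A * eps * (y - x)) with (8 * A * (y - x) * eps) by ring.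
    rewrite <- (Rmult_1_r (8 * A * (y - x))) at 2; apply Rmult_le_compat_l; lra.
Qed.

Definition digit (q : Z) : nat := Z.to_nat (q mod Z.of_nat M).

Lemma digit_lt (q : Z) : (digit q < M)%nat.
Proof.
  unfold digit; pose proof (Z.mod_pos_bound q (Z.of_nat M) ltac:(lia)); lia.
Qed.

(* [node j q] is the level-(j+1) window coded by the base-M expansion of q:
   its parent is [node (j-1) (q / M)] and it is the child of index q mod M. *)
Fixpoint node (j : nat) (q : Z) : R * R :=
  match j with
  | O => let K := up (xi * A) in ((IZR K + a 1%nat) / xi, (IZR K + a 1%nat + eps) / xi)
  | S j' => child (S (S j')) (fst (node j' (q / Z.of_nat M))) (digit q)
  end.

Lemma node_window (j : nat) (q : Z) : window (S j) (node j q).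
Proof.
  revert q; induction j as [|j IH]; intros q.
  - cbn [node]; destruct (archimed (xi * A)) as [HK1 HK2].
    pose proof (a_bounds 1 (le_n 1)) as Ha1.
    assert (Hdiv : forall v, xi * (v / xi) = v) by (intros; field; lra).
    repeat split; cbn [fst snd].
    + apply (Rmult_le_reg_l xi); [lra|]; rewrite Hdiv; lra.
    + apply Rmult_lt_compat_r; [apply Rinv_0_lt_compat|]; lra.
    + apply (Rmult_le_reg_l xi); [lra|]; rewrite Hdiv; lra.
    + exists (up (xi * A)); rewrite !pow_1, !Hdiv; split; reflexivity.
  - cbn [node]; specialize (IH (q / Z.of_nat M)%Z).
    destruct (node j (q / Z.of_nat M)) as [l r]; cbn [fst].
    apply (child_window (S j) l r); [lia|exact IH|apply digit_lt].
Qed.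

Lemma node_nested (j : nat) (q : Z) :
  fst (node j (q / Z.of_nat M)) <= fst (node (S j) q) /\
  snd (node (S j) q) <= snd (node j (q / Z.of_nat M)).
Proof.
  pose proof (node_window j (q / Z.of_nat M)) as Hw; cbn [node].
  destruct (node j (q / Z.of_nat M)) as [l r]; cbn [fst snd] in *.
  destruct (child_window (S j) l r (digit q) ltac:(lia) Hw (digit_lt q)) as (_ & Hl & Hr).
  lra.
Qed.

Lemma node_length (j : nat) (q : Z) :
  eps / xi <= (8 * A) ^ j * (snd (node j q) - fst (node j q)).
Proof.
  revert q; induction j as [|j IH]; intros q.
  - cbn [node fst snd pow]; right; field; lra.
  - specialize (IH (q / Z.of_nat M)%Z).
    pose proof (node_window j (q / Z.of_nat M)) as Hw; cbn [node].
    destruct (node j (q / Z.of_nat M)) as [l r]; cbn [fst snd] in *.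
    pose proof (child_length (S j) l r (digit q) ltac:(lia) Hw (digit_lt q)) as Hlen.
    assert (0 <= (8 * A) ^ j) by (apply pow_le; lra).
    apply (Rle_trans _ _ _ IH); rewrite <- tech_pow_Rmult, (Rmult_comm (8 * A)), Rmult_assoc.
    apply Rmult_le_compat_l; lra.
Qed.

Lemma node_separated (j : nat) (q1 q2 : Z) (x y : R) :
  (q1 / Z.of_nat M = q2 / Z.of_nat M)%Z -> q1 <> q2 ->
  fst (node (S j) q1) <= x <= snd (node (S j) q1) ->
  fst (node (S j) q2) <= y <= snd (node (S j) q2) ->
  (1 - eps) * (snd (node j (q1 / Z.of_nat M)) - fst (node j (q1 / Z.of_nat M)))
    <= 8 * A * Rabs (x - y).
Proof.
  intros Hq Hne Hx Hy; cbn [node] in Hx, Hy; rewrite <- Hq in Hy.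
  pose proof (node_window j (q1 / Z.of_nat M)) as Hw.
  destruct (node j (q1 / Z.of_nat M)) as [l r]; cbn [fst snd] in *.
  assert (Hdigit : digit q1 <> digit q2).
  { intros Heq; apply Hne; unfold digit in Heq; apply Z2Nat.inj in Heq;
      try (apply Z.mod_pos_bound; lia).
    rewrite (Z.div_mod q1 (Z.of_nat M)), (Z.div_mod q2 (Z.of_nat M)) by lia.
    now rewrite Hq, Heq. }
  assert (H8A : 0 < 8 * A) by lra.
  destruct (Nat.lt_gt_cases (digit q1) (digit q2)) as [[Hlt|Hlt] _]; [exact Hdigit| |].
  - pose proof (child_separated (S j) l r _ _ x y ltac:(lia) Hw Hlt (digit_lt q2) Hx Hy).
    rewrite Rabs_minus_sym; apply (Rle_trans _ _ _ H), Rmult_le_compat_l, Rle_abs; lra.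
  - pose proof (child_separated (S j) l r _ _ y x ltac:(lia) Hw Hlt (digit_lt q1) Hy Hx).
    apply (Rle_trans _ _ _ H), Rmult_le_compat_l, Rle_abs; lra.
Qed.

Definition leading_digits (t : R) (j : nat) : Z := Int_part (INR M ^ j * t).

Lemma leading_digits_div (t : R) (j : nat) :
  (leading_digits t (S j) / Z.of_nat M)%Z = leading_digits t j.
Proof.
  unfold leading_digits; set (f := Int_part (INR M ^ j * t)).
  set (f' := Int_part (INR M ^ S j * t)).
  assert (HM : 0 < INR M) by (apply lt_0_INR; lia).
  pose proof (base_Int_part (INR M ^ j * t)) as Hf; fold f in Hf.
  pose proof (base_Int_part (INR M ^ S j * t)) as Hf'; fold f' in Hf'.
  replace (INR M ^ S j * t) with (INR M * (INR M ^ j * t)) in Hf' by (simpl; ring).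
  assert (Hlow : INR M * IZR f <= INR M * (INR M ^ j * t)) by (apply Rmult_le_compat_l; lra).
  assert (Hhigh : INR M * (INR M ^ j * t) < INR M * (IZR f + 1))
    by (apply Rmult_lt_compat_l; lra).
  assert (H1 : (Z.of_nat M * f <= f')%Z).
  { apply Z.lt_succ_r, lt_IZR; rewrite succ_IZR, mult_IZR, <- INR_IZR_INZ; lra. }
  assert (H2 : (f' < Z.of_nat M * f + Z.of_nat M)%Z).
  { apply lt_IZR; rewrite plus_IZR, mult_IZR, <- INR_IZR_INZ; lra. }
  symmetry; apply (Z.div_unique_pos _ _ _ (f' - Z.of_nat M * f)); lia.
Qed.

Lemma leading_digits_0 (t : R) : 0 <= t < 1 -> leading_digits t 0 = 0%Z.
Proof.
  intros Ht; unfold leading_digits; rewrite pow_O, Rmult_1_l.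
  symmetry; apply (Int_part_frac_part_spec t 0 t); [lra|ring].
Qed.

Lemma leading_digits_close (t t' : R) (j : nat) :
  leading_digits t j = leading_digits t' j -> Rabs (t - t') < / INR M ^ j.
Proof.
  unfold leading_digits; intros Hj.
  pose proof (base_Int_part (INR M ^ j * t)) as B1.
  pose proof (base_Int_part (INR M ^ j * t')) as B2.
  rewrite Hj in B1.
  assert (HMj : 0 < INR M ^ j) by (apply pow_lt, lt_0_INR; lia).
  assert (Habs : Rabs (INR M ^ j * (t - t')) < 1) by (apply Rabs_def1; lra).
  rewrite Rabs_mult, (Rabs_pos_eq (INR M ^ j)) in Habs by lra.
  apply (Rmult_lt_reg_l (INR M ^ j)); [exact HMj|]; rewrite Rinv_r; lra.
Qed.

Lemma leading_digits_differ (t t' : R) : t <> t' ->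
  exists J, leading_digits t J <> leading_digits t' J.
Proof.
  intros Hne; assert (Hd : 0 < Rabs (t - t')) by (apply Rabs_pos_lt; lra).
  pose proof (le_INR 2 M M_ge2) as HM2; simpl in HM2.
  destruct (INR_unbounded (/ Rabs (t - t'))) as [J HJ]; exists J; intros Heq.
  pose proof (leading_digits_close t t' J Heq) as Hclose.
  assert (HMJ : 1 + INR J * (INR M - 1) <= INR M ^ J).
  { replace (INR M) with (1 + (INR M - 1)) at 2 by ring.
    apply Rle_pow_lin; lra. }
  apply (Rmult_lt_compat_l (INR M ^ J)) in Hclose; [|apply pow_lt; lra].
  rewrite Rinv_r in Hclose by (apply pow_nonzero; lra).
  apply (Rmult_lt_compat_l (Rabs (t - t'))) in HJ; [|exact Hd].
  rewrite Rinv_r in HJ by lra.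
  pose proof (pos_INR J); nra.
Qed.

Definition branch (t : R) (j : nat) : R * R := node j (leading_digits t j).

Definition cantor_map (t : R) : R := real (Lub_Rbar (fun x => exists j, x = fst (branch t j))).

Lemma cantor_map_in_branch (t : R) (j : nat) :
  fst (branch t j) <= cantor_map t <= snd (branch t j).
Proof.
  apply (nested_intervals_lub (fun k => fst (branch t k)) (fun k => snd (branch t k)));
    intros k; unfold branch.
  1,2: pose proof (node_nested k (leading_digits t (S k))) as Hn;
       rewrite leading_digits_div in Hn; lra.
  destruct (node_window k (leading_digits t k)) as (_ & H & _); lra.
Qed.

Lemma cantor_map_in_frac_set (t : R) : frac_set (cantor_map t).
Proof.
  intros n Hn; destruct n as [|j]; [lia|].
  pose proof (cantor_map_in_branch t j) as Hg.
  pose proof (node_window j (leading_digits t j)) as Hw.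
  unfold branch in Hg; destruct (node j (leading_digits t j)) as [l r]; cbn [fst snd] in *.
  destruct Hw as (HlA & _ & _ & K & HKl & HKr); cbn [fst snd] in *.
  assert (Hlow : xi * l ^ S j <= xi * cantor_map t ^ S j) by (apply xi_pow_le; lra).
  assert (Hhigh : xi * cantor_map t ^ S j <= xi * r ^ S j) by (apply xi_pow_le; lra).
  specialize (a_bounds (S j) Hn).
  replace (xi * cantor_map t ^ S j) with (IZR K + (xi * cantor_map t ^ S j - IZR K)) by ring.
  rewrite frac_part_IZR_plus by lra; lra.
Qed.

Lemma cantor_map_separated : exists c, 0 < c /\
  forall t t', 0 <= t < 1 -> 0 <= t' < 1 -> t <> t' ->
  exists j, Rabs (t - t') < / INR M ^ j /\
            c / (8 * A) ^ j <= Rabs (cantor_map t - cantor_map t').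
Proof.
  exists ((1 - eps) * (eps / xi) / (8 * A)); split.
  { apply Rdiv_lt_0_compat; [apply Rmult_lt_0_compat, Rdiv_lt_0_compat|]; lra. }
  intros t t' Ht Ht' Hne.
  destruct (leading_digits_differ t t' Hne) as [J HJ].
  destruct (first_difference (leading_digits t) (leading_digits t') J) as (j & Hj & Hj1);
    [rewrite !leading_digits_0 by lra; reflexivity|exact HJ|].
  exists j; split; [now apply leading_digits_close|].
  pose proof (cantor_map_in_branch t (S j)) as G.
  pose proof (cantor_map_in_branch t' (S j)) as G'.
  unfold branch in G, G'.
  pose proof (node_separated j _ _ _ _
    (eq_trans (leading_digits_div t j) (eq_trans Hj (eq_sym (leading_digits_div t' j))))
    Hj1 G G') as Hsep.
  rewrite leading_digits_div in Hsep.
  pose proof (node_length j (leading_digits t j)) as Hlen.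
  set (L := snd (node j (leading_digits t j)) - fst (node j (leading_digits t j))) in *.
  assert (H8j : 0 < (8 * A) ^ j) by (apply pow_lt; lra).
  apply (Rmult_le_reg_l (8 * A)); [lra|].
  apply Rle_trans with ((1 - eps) * L); [|exact Hsep].
  replace (8 * A * ((1 - eps) * (eps / xi) / (8 * A) / (8 * A) ^ j))
    with ((1 - eps) * (eps / xi / (8 * A) ^ j)) by (field; lra).
  apply Rmult_le_compat_l; [lra|].
  apply (Rmult_le_reg_l ((8 * A) ^ j)); [exact H8j|].
  replace ((8 * A) ^ j * (eps / xi / (8 * A) ^ j)) with (eps / xi) by (field; lra).
  exact Hlen.
Qed.

Lemma cantor_map_coholder (s : R) : 0 <= s -> / INR M <= Rpower (/ (8 * A)) s ->
  exists C, 0 < C /\ forall t t', 0 <= t < 1 -> 0 <= t' < 1 -> t <> t' ->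
    cantor_map t <> cantor_map t' /\
    Rabs (t - t') <= C * Rpower (Rabs (cantor_map t - cantor_map t')) s.
Proof.
  intros Hs Hscale; destruct cantor_map_separated as (c & Hc & Hsep).
  exists (/ Rpower c s); split; [apply Rinv_0_lt_compat, Rpower_gt_0|].
  intros t t' Ht Ht' Hne; destruct (Hsep t t' Ht Ht' Hne) as (j & Hclose & Hfar).
  assert (H8A : 0 < / (8 * A)) by (apply Rinv_0_lt_compat; lra).
  assert (Hcj : 0 < c / (8 * A) ^ j) by (apply Rdiv_lt_0_compat, pow_lt; lra).
  split; [intros Heq; rewrite Heq, Rminus_diag, Rabs_R0 in Hfar; lra|].
  apply (Rmult_le_reg_l (Rpower c s)); [apply Rpower_gt_0|].
  rewrite <- Rmult_assoc, Rinv_r, Rmult_1_l by (apply Rgt_not_eq, Rpower_gt_0).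
  apply Rle_trans with (Rpower (c / (8 * A) ^ j) s); [|apply Rle_Rpower_l; [lra|split; lra]].
  unfold Rdiv; rewrite <- pow_inv, <- Rpower_mult_distr by (try apply pow_lt; lra).
  rewrite <- Rpower_pow_comm by lra.
  apply Rmult_le_compat_l; [left; apply Rpower_gt_0|].
  apply Rle_trans with ((/ INR M) ^ j); [rewrite pow_inv; lra|].
  apply pow_incr; split; [left; apply Rinv_0_lt_compat, lt_0_INR; lia|exact Hscale].
Qed.

End CantorConstruction.

Lemma exists_cantor_scale (xi eps s : R) : 0 < xi -> 0 < eps < 1 -> 0 <= s < 1 ->
  exists (M : nat) (A : R), (2 <= M)%nat /\ 1 <= A /\ 2 <= xi * A /\
    INR M + 1 <= A * eps /\ / INR M <= Rpower (/ (8 * A)) s.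
Proof.
  intros Hxi Heps Hs.
  (* With A = (M + 1) / eps we have 8 A <= 16 M / eps, so (8 A)^s <= M as soon as
     ln M >= s ln (16 / eps) / (1 - s). *)
  set (X := s * ln (16 / eps) / (1 - s)).
  destruct (INR_unbounded (Rmax 2 (Rmax (2 / xi) (exp X)))) as [M HM].
  pose proof (Rmax_l 2 (Rmax (2 / xi) (exp X))); pose proof (Rmax_r 2 (Rmax (2 / xi) (exp X))).
  pose proof (Rmax_l (2 / xi) (exp X)); pose proof (Rmax_r (2 / xi) (exp X)).
  set (A := (INR M + 1) / eps).
  assert (HA : A * eps = INR M + 1) by (unfold A; field; lra).
  assert (HMA : INR M + 1 <= A).
  { apply (Rmult_le_reg_r eps); [lra|]; rewrite HA.
    assert (0 <= INR M + 1) by lra; nra. }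
  exists M, A; repeat split; try lra.
  - apply INR_lt; simpl; lra.
  - apply Rle_trans with (xi * (2 / xi)); [right; field; lra|].
    apply Rmult_le_compat_l; lra.
  - assert (HM0 : 0 < INR M) by lra.
    apply inv_le_Rpower_inv; [lra|lra|].
    assert (H8A : 8 * A <= INR M * (16 / eps)).
    { apply (Rmult_le_reg_r eps); [lra|].
      replace (8 * A * eps) with (8 * (INR M + 1)) by (rewrite <- HA; ring).
      replace (INR M * (16 / eps) * eps) with (16 * INR M) by (field; lra); lra. }
    assert (Hln : ln (8 * A) <= ln (INR M) + ln (16 / eps))
      by (rewrite <- ln_mult by (try apply Rdiv_lt_0_compat; lra); apply ln_le; lra).
    assert (HlnM : X <= ln (INR M)) by (rewrite <- (ln_exp X); apply ln_le; [apply exp_pos|lra]).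
    assert (HX : s * ln (16 / eps) <= (1 - s) * ln (INR M)).
    { apply (Rmult_le_compat_l (1 - s)) in HlnM; [|lra].
      replace ((1 - s) * X) with (s * ln (16 / eps)) in HlnM by (unfold X; field; lra).
      exact HlnM. }
    assert (s * ln (8 * A) <= s * (ln (INR M) + ln (16 / eps)))
      by (apply Rmult_le_compat_l; lra).
    lra.
Qed.

Lemma hausdorff_measure_frac_set_pos (xi eps s : R) (a : nat -> R) : 0 < xi -> 0 < eps < 1 ->
  (forall n, (1 <= n)%nat -> 0 <= a n < 1 - eps) -> 0 <= s < 1 ->
  hausdorff_measure s (frac_set xi eps a) <> Finite 0.
Proof.
  intros Hxi Heps Ha Hs.
  destruct (exists_cantor_scale xi eps s Hxi Heps Hs)
    as (M & A & HM & HA & HxiA & Hroom & Hscale).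
  destruct (cantor_map_coholder xi eps a M A Hxi Heps Ha HM HA HxiA Hroom s (proj1 Hs) Hscale)
    as (C & HC & Hcoholder).
  apply (hausdorff_measure_pos_of_coholder _ (cantor_map xi eps a M A) s C (proj1 Hs) HC).
  - intros t _; now apply cantor_map_in_frac_set.
  - exact Hcoholder.
Qed.

Theorem theorem3 (xi eps : R) (a : nat -> R) :
  0 < xi -> 0 < eps < 1 ->
  (forall n : nat, (1 <= n)%nat -> 0 <= a n < 1 - eps) ->
  hausdorff_dim
    (fun alpha : R => forall n : nat, (1 <= n)%nat ->
       a n <= frac_part (xi * alpha ^ n) <= a n + eps)
  = Finite 1.
Proof.
  intros Hxi Heps Ha.
  apply (hausdorff_dim_eq (frac_set xi eps a)); [lra| |].
  - intros s Hs; now apply hausdorff_measure_gt1.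
  - intros s Hs; now apply hausdorff_measure_frac_set_pos.
Qed.
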